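(* Let $G$ be a finite graph and $K$ a maximal clique of $G$. Then $\log_2(\mathsf{dn}(K)+2)\le|\widetilde{K}|\le 2^{\mathsf{dn}(K)}$.
   Context: Two vertices are equivalent if they lie in exactly the same maximal cliques of $G$; $\widetilde{K}$ is the set of equivalence classes intersecting $K$. For $X\subseteq V(G)$, with $N(X)$ the set of vertices outside $X$ having a neighbour in $X$, a set $Y\subseteq N(X)$ is $X$-diverse if $N(y_1)\cap X\neq N(y_2)\cap X$ for all distinct $y_1,y_2\in Y$; the diversity number $\mathsf{dn}(X)$ is the maximum size of an $X$-diverse subset of $N(X)$. *)

From mathcomp Require Import all_boot.
From Stdlib Require Import Reals.
Set Implicit Arguments. Unset Strict Implicit. Unset Printing Implicit Defensive.

(* Simple graph on a finite vertex type T: adjacency e : rel T,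
   assumed symmetric and irreflexive in the theorem. *)
Section GraphDefs.
Variables (T : finType) (e : rel T).

Definition clique (K : {set T}) : bool :=
  [forall x in K, forall y in K, (x != y) ==> e x y].

Definition maximal_clique (K : {set T}) : bool := maxset clique K.

Definition clique_equiv (x y : T) : bool :=
  [forall K : {set T}, maximal_clique K ==> ((x \in K) == (y \in K))].

Definition eqclass (x : T) : {set T} := [set y | clique_equiv x y].

Definition Ktilde (K : {set T}) : {set {set T}} := [set eqclass x | x in K].

Definition nbr (y : T) : {set T} := [set z | e y z].

Definition Nset (X : {set T}) : {set T} :=
  [set y | (y \notin X) && [exists x in X, e y x]].

Definition diverse (X Y : {set T}) : bool :=
  (Y \subset Nset X) &&
  [forall y1 in Y, forall y2 in Y, (y1 != y2) ==> (nbr y1 :&: X != nbr y2 :&: X)].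

Definition dn (X : {set T}) : nat := \max_(Y : {set T} | diverse X Y) #|Y|.

End GraphDefs.

From mathcomp Require Import all_boot.
From Stdlib Require Import Reals Lra.
Set Implicit Arguments. Unset Strict Implicit.

(* Write tr(y) = N(y) ∩ K for the trace of y ∈ N(K) on K.  A diverse set is a
   set of vertices of N(K) with pairwise distinct traces, so dn(K) is the
   number t of distinct traces.  Two vertices of K lying in the same traces
   have the same neighbours outside K, hence lie in the same maximal cliques:
   |K~| <= 2^t.  Conversely a trace is a union of (restricted) classes, and
   the set of classes it meets is neither empty nor all of K~, since K is a
   maximal clique: t <= 2^|K~| - 2. *)

Lemma imset_injective_subset (aT rT : finType) (f : aT -> rT) (A : {set aT}) :
  exists B : {set aT}, [/\ B \subset A, {in B &, injective f} & f @: B = f @: A].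
Proof.
pose rep x := odflt x [pick y in A | f y == f x].
have repP x : x \in A -> rep x \in A /\ f (rep x) = f x.
  move=> Ax; rewrite /rep; case: pickP => [y /andP[Ay /eqP //] | /(_ x)].
  by rewrite Ax eqxx.
have rep_eq x x' : f x = f x' -> x \in A -> rep x = rep x'.
  move=> fx Ax; rewrite /rep fx; case: pickP => // /(_ x).
  by rewrite Ax fx eqxx.
exists [set x in A | rep x == x]; split.
- by apply/subsetP => x /setIdP[].
- move=> x x'; rewrite !inE => /andP[Ax /eqP rx] /andP[_ /eqP rx'] fx.
  by rewrite -rx -rx' (rep_eq _ _ fx Ax).
- apply/setP => t; apply/imsetP/imsetP => [[x] | [x Ax ->]].
    by rewrite inE => /andP[Ax _] ->; exists x.
  have [repA frep] := repP x Ax.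
  exists (rep x); last by rewrite frep.
  by rewrite inE repA (rep_eq _ _ frep repA) /=.
Qed.

Lemma leq_imset_card_factor (aT rT sT : finType) (f : aT -> rT) (g : aT -> sT)
    (A : {set aT}) :
  {in A &, forall x y, g x = g y -> f x = f y} -> #|f @: A| <= #|g @: A|.
Proof.
move=> fg; have [B [BA g_inj gBA]] := imset_injective_subset g A.
have fAB : f @: A \subset f @: B.
  apply/subsetP => _ /imsetP[x Ax ->].
  have /imsetP[y By gxy] : g x \in g @: B by rewrite gBA imset_f.
  by apply/imsetP; exists y; rewrite // (fg x y) // (subsetP BA).
rewrite -gBA (card_in_imset g_inj).
exact: leq_trans (subset_leq_card fAB) (leq_imset_card _ _).
Qed.

Lemma card_nontrivial_subsets (T : finType) (A : {set T}) :
  A != set0 -> (#|powerset A :\ set0 :\ A|).+2 = expn 2 #|A|.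
Proof.
move=> A0; rewrite -card_powerset (cardsD1 set0 (powerset A)).
by rewrite (cardsD1 A (powerset A :\ set0)) !inE sub0set subxx A0.
Qed.

Section MaximalCliques.

Variables (T : finType) (e : rel T).
Hypothesis e_sym : symmetric e.

Lemma cliqueP (A : {set T}) :
  reflect {in A &, forall x y, x != y -> e x y} (clique e A).
Proof.
apply: (iffP forall_inP) => [cA x y Ax Ay | cA x Ax].
  exact/implyP/(forall_inP (cA x Ax)).
by apply/forall_inP => y Ay; apply/implyP; apply: cA.
Qed.

Lemma maximal_clique_clique K : maximal_clique e K -> clique e K.
Proof. by case/maxsetP. Qed.

Lemma maximal_clique_nonadj K y :
  maximal_clique e K -> y \notin K -> exists2 x, x \in K & ~~ e y x.
Proof.
case/maxsetP => /cliqueP cK maxK yK.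
have [/forall_inP ally | /forall_inPn //] := boolP [forall x in K, e y x].
have cyK : clique e (y |: K).
  apply/cliqueP => a b; rewrite !in_setU1.
  move=> /predU1P[-> | Ka] /predU1P[-> | Kb] ab.
  - by rewrite eqxx in ab.
  - exact: ally.
  - by rewrite e_sym; apply: ally.
  - exact: cK.
by move: yK; rewrite -(maxK _ cyK (subsetUr _ _)) setU11.
Qed.

Lemma maximal_clique_neq0 K : maximal_clique e K -> 0 < #|T| -> K != set0.
Proof.
move=> maxK /card_gt0P[t _]; apply/set0Pn.
have [tK | /(maximal_clique_nonadj maxK)[x xK _]] := boolP (t \in K).
  by exists t.
by exists x.
Qed.

Lemma edge_maximal_clique a b :
  e a b -> exists2 M, maximal_clique e M & (a \in M) && (b \in M).
Proof.
move=> eab; have cab : clique e [set a; b].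
  apply/cliqueP => x y; rewrite !inE.
  by move=> /orP[]/eqP-> /orP[]/eqP->; rewrite ?eqxx // (e_sym b).
have [M maxM abM] := maxset_exists cab.
by exists M; rewrite // !(subsetP abM) // !inE eqxx ?orbT.
Qed.

Lemma clique_equivP x y :
  reflect (forall M, maximal_clique e M -> (x \in M) = (y \in M))
          (clique_equiv e x y).
Proof.
apply: (iffP forallP) => [xy M maxM | xy M]; first exact/eqP/(implyP (xy M)).
by apply/implyP => /xy ->.
Qed.

Lemma eqclass_eqE x y : (eqclass e x == eqclass e y) = clique_equiv e x y.
Proof.
apply/eqP/clique_equivP => [exy | xy].
  have : y \in eqclass e x by rewrite exy inE; apply/clique_equivP.
  by rewrite inE => /clique_equivP.
apply/setP => z; rewrite !inE.
apply/clique_equivP/clique_equivP => zM M maxM; first by rewrite -(zM M maxM) xy.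
by rewrite xy // zM.
Qed.

Lemma clique_equiv_edge x y z :
  clique_equiv e x z -> e y z -> y != x -> e y x.
Proof.
move=> /clique_equivP xz eyz yx.
have [M maxM /andP[yM zM]] := edge_maximal_clique eyz.
have /cliqueP cM := maximal_clique_clique maxM.
by apply: cM; rewrite ?xz.
Qed.

(* A maximal clique containing only one of the twins could be enlarged by
   the other. *)
Lemma twins_clique_equiv x x' :
  e x x' -> (forall m, m != x -> m != x' -> e x m = e x' m) ->
  clique_equiv e x x'.
Proof.
suff twin_mem u v : e u v -> (forall m, m != u -> m != v -> e u m = e v m) ->
    forall M, maximal_clique e M -> u \in M -> v \in M.
  move=> exx' same; apply/clique_equivP => M maxM; apply/idP/idP.
    exact: twin_mem.
  apply: twin_mem => //; first by rewrite e_sym.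
  by move=> m mx' mx; rewrite same.
move=> euv same M maxM uM; apply/negPn/negP => vM.
have [m mM /negP] := maximal_clique_nonadj maxM vM; apply.
have [-> | mu] := eqVneq m u; first by rewrite e_sym.
have mv : m != v by apply: contraNneq vM => <-.
have /cliqueP cM := maximal_clique_clique maxM.
by rewrite -same // cM // eq_sym.
Qed.

Definition nbr_trace (X : {set T}) (y : T) : {set T} := nbr e y :&: X.

Definition traces (X : {set T}) : {set {set T}} := nbr_trace X @: Nset e X.

Lemma mem_nbr_trace (X : {set T}) y x :
  (x \in nbr_trace X y) = e y x && (x \in X).
Proof. by rewrite !inE. Qed.

Lemma diverseP (X Y : {set T}) :
  reflect (Y \subset Nset e X /\ {in Y &, injective (nbr_trace X)})
          (diverse e X Y).
Proof.
apply: (iffP andP) => [[YN /forall_inP dY] | [YN injY]]; split=> //.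
  move=> y1 y2 y1Y y2Y /eqP; apply: contraTeq.
  exact: (implyP (forall_inP (dY y1 y1Y) y2 y2Y)).
apply/forall_inP => y1 y1Y; apply/forall_inP => y2 y2Y; apply/implyP.
by apply: contra_neq; apply: injY.
Qed.

Lemma dn_traces (X : {set T}) : dn e X = #|traces X|.
Proof.
apply/eqP; rewrite eqn_leq; apply/andP; split.
  apply/bigmax_leqP => Y /diverseP[YN injY].
  by rewrite -(card_in_imset injY); apply/subset_leq_card/imsetS.
have [Y [YN injY NY]] := imset_injective_subset (nbr_trace X) (Nset e X).
rewrite /traces -NY (card_in_imset injY).
by apply: (@leq_bigmax_cond _ (diverse e X) (fun Y => #|Y|)); apply/diverseP.
Qed.

Lemma card_Ktilde_le (K : {set T}) :
  maximal_clique e K -> #|Ktilde e K| <= expn 2 #|traces K|.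
Proof.
move=> maxK; have /cliqueP cK := maximal_clique_clique maxK.
pose profile x := [set t in traces K | x \in t].
have same_class : {in K &, forall x x',
    profile x = profile x' -> eqclass e x = eqclass e x'}.
  move=> x x' xK x'K pxx'; apply/eqP; rewrite eqclass_eqE.
  have [<- | xx'] := eqVneq x x'; first by rewrite -eqclass_eqE.
  apply: twins_clique_equiv; first exact: cK.
  move=> m mx mx'; have [mK | mK] := boolP (m \in K).
    by rewrite !cK // eq_sym.
  have [mN | mN] := boolP (m \in Nset e K).
    have := congr1 (fun S : {set {set T}} => nbr_trace K m \in S) pxx'.
    by rewrite /= !inE imset_f // xK x'K !andbT (e_sym x) (e_sym x').
  have noadj z : z \in K -> e z m = false.
    move=> zK; apply: contraNF mN => ezm; rewrite inE mK.
    by apply/exists_inP; exists z; rewrite // e_sym.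
  by rewrite !noadj.
apply: leq_trans (leq_imset_card_factor same_class) _.
rewrite -card_powerset; apply/subset_leq_card/subsetP => _ /imsetP[x _ ->].
by rewrite powersetE; apply/subsetP => t; rewrite inE => /andP[].
Qed.

Lemma mem_eqclass_trace (K : {set T}) y x : y \notin K -> x \in K ->
  (eqclass e x \in [set eqclass e z | z in nbr_trace K y]) = e y x.
Proof.
move=> yK xK; apply/imsetP/idP => [[z] | eyx]; last first.
  by exists x; rewrite // mem_nbr_trace eyx.
rewrite mem_nbr_trace => /andP[eyz _] /eqP; rewrite eqclass_eqE => xz.
by apply: (clique_equiv_edge xz eyz); apply: contraNneq yK => ->.
Qed.

Lemma card_traces_le (K : {set T}) : maximal_clique e K -> K != set0 ->
  (#|traces K|).+2 <= expn 2 #|Ktilde e K|.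
Proof.
move=> maxK K0; pose classes (t : {set T}) := [set eqclass e z | z in t].
have classesK :
    {in traces K, cancel classes (fun S => [set x in K | eqclass e x \in S])}.
  move=> _ /imsetP[y yN ->]; have yK : y \notin K by case/setIdP: yN.
  apply/setP => x; rewrite inE mem_nbr_trace.
  by case: (boolP (x \in K)) => xK; rewrite ?andbT ?andbF // mem_eqclass_trace.
have sub : classes @: traces K \subset powerset (Ktilde e K) :\ set0 :\ Ktilde e K.
  apply/subsetP => _ /imsetP[_ /imsetP[y yN ->] ->].
  have /setIdP[yK /exists_inP[x xK eyx]] := yN.
  rewrite !in_setD1 powersetE; apply/and3P; split.
  - have [x' x'K nyx'] := maximal_clique_nonadj maxK yK.
    apply: contraNneq nyx' => full.
    have : eqclass e x' \in Ktilde e K by apply: imset_f.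
    by rewrite -full /classes mem_eqclass_trace.
  - by apply/set0Pn; exists (eqclass e x); rewrite mem_eqclass_trace.
  - apply/subsetP => _ /imsetP[z zt ->]; apply: imset_f.
    by move: zt; rewrite mem_nbr_trace => /andP[].
have Kt0 : Ktilde e K != set0.
  by case/set0Pn: K0 => x xK; apply/set0Pn; exists (eqclass e x); apply: imset_f.
rewrite -card_nontrivial_subsets // !ltnS.
by rewrite -(card_in_imset (can_in_inj classesK)) subset_leq_card.
Qed.

End MaximalCliques.

Lemma INR_expn n : INR (expn 2 n) = (2 ^ n)%R.
Proof. by elim: n => [|n IH] //=; rewrite expnS -multE mult_INR IH /=; ring. Qed.

Lemma ln_div_ln2_le n k :
  0 < n -> n <= expn 2 k -> (ln (INR n) / ln 2 <= INR k)%R.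
Proof.
move=> /ltP n0 /leP nk.
have l2 : (0 < ln 2)%R by have := ln_lt_2; lra.
have n0R : (0 < INR n)%R by apply: lt_0_INR.
have nkR : (INR n <= 2 ^ k)%R by rewrite -INR_expn; apply: le_INR.
have lnk : (ln (INR n) <= INR k * ln 2)%R.
  rewrite -ln_pow; last lra.
  case: (Rle_lt_or_eq_dec _ _ nkR) => [lt | ->]; last exact: Rle_refl.
  exact/Rlt_le/ln_increasing.
apply: (Rmult_le_reg_r (ln 2)) => //.
by rewrite /Rdiv Rmult_assoc Rinv_l ?Rmult_1_r //; lra.
Qed.

Theorem lemma7p1 (T : finType) (e : rel T)
  (e_sym : symmetric e) (e_irr : irreflexive e)
  (T_nonempty : 0 < #|T|)
  (K : {set T}) (hK : maximal_clique e K) :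
  (ln (INR (dn e K + 2)) / ln 2 <= INR #|Ktilde e K|)%R /\
  #|Ktilde e K| <= expn 2 (dn e K).
Proof.
rewrite dn_traces; split; last exact: card_Ktilde_le.
apply: ln_div_ln2_le; first by rewrite addn2.
by rewrite addn2 (card_traces_le e_sym hK) // (maximal_clique_neq0 e_sym hK).
Qed.
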